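(* If a mixed graph $G=(V,D,B)$ with $V=[m]$ has $|D|+|B|>\binom{m}{2}$ edges (where $|B|$ counts unordered bidirected edges), then $G$ is HTC-infinite-to-one: every family $(Y_v:v\in V)$ of subsets of $V$ either contains a set $Y_v$ not satisfying the half-trek criterion with respect to $v$, or contains a pair $Y_v,Y_w$ with $v\in Y_w$ and $w\in Y_v$.
   Context: A mixed graph is $G=(V,D,B)$ with $V=[m]$, $D\subseteq V\times V$ directed edges $v\to w$, $B$ a set of bidirected edges $v\leftrightarrow w$ (unordered), no self-loops. $\mathrm{pa}(v)=\{w:w\to v\in D\}$, $\mathrm{sib}(v)=\{w:w\leftrightarrow v\in B\}$. A half-trek from $v$ to $w$ is a path $v\leftrightarrow w_0\to w_1\to\cdots\to w_r=w$ (left side $\{v\}$, right side $\{w_0,\dots,w_r\}$) or $v\to w_1\to\cdots\to w_r=w$, $r\ge0$ (left side $\{v\}$, right side $\{v,w_1,\dots,w_r\}$); nodes may repeat. A system of half-treks from $X$ to $Y$ is a set of half-treks with distinct sources forming $X$ and distinct targets forming $Y$; no sided intersection means pairwise disjoint left sides and pairwise disjoint right sides. $Y$ satisfies the half-trek criterion w.r.t. $v$ if $|Y|=|\mathrm{pa}(v)|$, $Y\cap(\{v\}\cup\mathrm{sib}(v))=\emptyset$, and there is a system of half-treks with no sided intersection from $Y$ to $\mathrm{pa}(v)$. *)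

From mathcomp Require Import all_boot.
Set Implicit Arguments. Unset Strict Implicit. Unset Printing Implicit Defensive.

(* A mixed graph on V = 'I_m is given by two relations:
   D v w  <-> v -> w is a directed edge,
   B v w  <-> v <-> w is a bidirected edge (B symmetric; each unordered
   pair {v,w} is one bidirected edge).  No self-loops: both irreflexive. *)

Section MixedGraph.
Variable m : nat.
Variables (D B : rel 'I_m).

Definition pa (v : 'I_m) : {set 'I_m} := [set w | D w v].
Definition sib (v : 'I_m) : {set 'I_m} := [set w | B w v].

Definition numD : nat := #|[set p : 'I_m * 'I_m | D p.1 p.2]|.
Definition numB : nat := #|[set p : 'I_m * 'I_m | (p.1 < p.2) && B p.1 p.2]|.

(* A half-trek is encoded by its source ht_src, and its right side
   ht_head :: ht_tail, which is a directed path.  Either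
   ht_src <-> ht_head (first kind: v <-> w0 -> ... -> wr), or
   ht_head = ht_src (second kind: v -> w1 -> ... -> wr, right side
   {v, w1, ..., wr}).  The left side is {ht_src}. *)
Record halftrek := HT { ht_src : 'I_m; ht_head : 'I_m; ht_tail : seq 'I_m }.

Definition ht_right (t : halftrek) : seq 'I_m := ht_head t :: ht_tail t.
Definition ht_tgt (t : halftrek) : 'I_m := last (ht_head t) (ht_tail t).

Definition is_halftrek (t : halftrek) : bool :=
  ((ht_head t == ht_src t) || B (ht_src t) (ht_head t))
  && path D (ht_head t) (ht_tail t).

(* s is a system of half-treks from X to Y with no sided intersection:
   distinct sources forming X, distinct targets forming Y, pairwise
   disjoint left sides (= distinct sources) and pairwise disjoint
   right sides. *)
Definition nsi_system (s : seq halftrek) (X Y : {set 'I_m}) : Prop :=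
  [/\ all is_halftrek s,
      uniq (map ht_src s) /\ [set x in map ht_src s] = X,
      uniq (map ht_tgt s) /\ [set y in map ht_tgt s] = Y &
      pairwise (fun t1 t2 => [disjoint ht_right t1 & ht_right t2]) s].

Definition HTC (Y : {set 'I_m}) (v : 'I_m) : Prop :=
  [/\ #|Y| = #|pa v|,
      Y :&: (v |: sib v) = set0 &
      exists s : seq halftrek, nsi_system s Y (pa v)].

Definition HTC_infinite_to_one : Prop :=
  forall Yf : 'I_m -> {set 'I_m},
    (exists v, ~ HTC (Yf v) v) \/
    (exists v w, [/\ v != w, v \in Yf w & w \in Yf v]).

End MixedGraph.

From mathcomp Require Import all_boot.
Set Implicit Arguments. Unset Strict Implicit. Unset Printing Implicit Defensive.

(* Suppose a family (Y_v) passes the first two HTC conditions,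
   |Y_v| = |pa(v)| and Y_v avoids {v} and sib(v), and contains no pair
   v in Y_w, w in Y_v.  Then the ordered pairs (v, w) with v in Y_w number
   sum_w |Y_w| = |D|; as v <> w, they split according to the order of v and
   w into the unordered pairs {v < w} with v in Y_w and those with w in Y_v.
   Together with the pairs {v < w} joined by a bidirected edge these form
   three pairwise disjoint families of 2-subsets of V, hence
   |D| + |B| <= C(m, 2).  So a graph with more edges is HTC-infinite-to-one. *)

Lemma card_pairs_rel (T : finType) (R : rel T) :
  #|[set p : T * T | R p.1 p.2]| = \sum_(y : T) #|[set x | R x y]|.
Proof.
transitivity (\sum_(x : T) \sum_(y | R x y) 1).
  by rewrite pair_big_dep /= sum1_card cardsE.
rewrite (exchange_big_dep predT) //=.
by apply: eq_bigr => y _; rewrite sum1_card cardsE.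
Qed.

Lemma card_ord_lt (m : nat) (y : 'I_m) : #|[set x : 'I_m | x < y]| = y.
Proof.
rewrite -sum1_card (eq_bigl (fun x : 'I_m => x < y)) => [|x]; last by rewrite inE.
by rewrite -(big_ord_widen _ (fun _ => 1) (ltnW (ltn_ord y))) sum1_card card_ord.
Qed.

Lemma card_ord_pairs_lt (m : nat) :
  #|[set p : 'I_m * 'I_m | p.1 < p.2]| = 'C(m, 2).
Proof.
rewrite (card_pairs_rel (fun x y : 'I_m => x < y)).
rewrite (eq_bigr (fun y : 'I_m => nat_of_ord y)) => [|y _]; last exact: card_ord_lt.
by rewrite -(big_mkord xpredT (fun i => i)) bin2_sum.
Qed.

Lemma card_irrefl_pairs (m : nat) (R : rel 'I_m) : irreflexive R ->
  #|[set p : 'I_m * 'I_m | R p.1 p.2]| =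
  #|[set p : 'I_m * 'I_m | (p.1 < p.2) && R p.1 p.2]|
  + #|[set p : 'I_m * 'I_m | (p.1 < p.2) && R p.2 p.1]|.
Proof.
move=> Rirr.
set Lo := [set p : 'I_m * 'I_m | (p.1 < p.2) && R p.1 p.2].
set Hi := [set p : 'I_m * 'I_m | (p.1 < p.2) && R p.2 p.1].
have -> : [set p | R p.1 p.2] = Lo :|: swap_pair @: Hi.
  apply/setP => -[v w]; rewrite !inE /=.
  apply/idP/orP => [Rvw | [/andP [_ ->] // | /imsetP [[x y] + [-> ->]]]].
    case: (ltngtP v w) => [_ | lt_wv | /val_inj eq_vw].
    - by left.
    - by right; apply/imsetP; exists (w, v); rewrite // inE /= lt_wv.
    - by move: Rvw; rewrite eq_vw Rirr.
  by rewrite inE /= => /andP [].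
rewrite cardsU (card_imset _ (can_inj swap_pairK)).
suff -> : Lo :&: swap_pair @: Hi = set0 by rewrite cards0 subn0.
apply/setP => -[v w]; rewrite !inE /=; apply/andP => -[/andP [lt_vw _]].
case/imsetP => -[x y]; rewrite inE /= => /andP [lt_xy _] [eq_v eq_w].
by move: lt_vw; rewrite eq_v eq_w ltnNge (ltnW lt_xy).
Qed.

Lemma card_disjoint_setU (T : finType) (A B : {set T}) :
  [disjoint A & B] -> #|A :|: B| = #|A| + #|B|.
Proof. by move=> disjAB; apply/eqP; rewrite (leq_card_setU A B).2. Qed.

Section EdgeBound.

Variables (m : nat) (D B : rel 'I_m).
Hypothesis B_sym : symmetric B.

Variable Y : 'I_m -> {set 'I_m}.
Hypothesis Y_card : forall v, #|Y v| = #|pa D v|.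
Hypothesis Y_avoid : forall v, Y v :&: (v |: sib B v) = set0.
Hypothesis Y_no_mutual : forall v w, v \in Y w -> w \notin Y v.

Lemma Y_memP (v w : 'I_m) : v \in Y w -> (v != w) && ~~ B v w.
Proof.
move=> vYw; move/setP/(_ v): (Y_avoid w).
by rewrite !inE vYw /= => /negbT; rewrite negb_or.
Qed.

Lemma numD_card_Y : numD D = #|[set p : 'I_m * 'I_m | p.1 \in Y p.2]|.
Proof.
rewrite /numD card_pairs_rel (card_pairs_rel (fun v w => v \in Y w)).
apply: eq_bigr => w _; suff -> : [set v | v \in Y w] = Y w by rewrite Y_card.
by apply/setP => v; rewrite inE.
Qed.

Lemma edge_bound : numD D + numB B <= 'C(m, 2).
Proof.
set Fwd := [set p : 'I_m * 'I_m | (p.1 < p.2) && (p.1 \in Y p.2)].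
set Bwd := [set p : 'I_m * 'I_m | (p.1 < p.2) && (p.2 \in Y p.1)].
set Bi := [set p : 'I_m * 'I_m | (p.1 < p.2) && B p.1 p.2].
have -> : numD D = #|Fwd| + #|Bwd|.
  rewrite numD_card_Y (@card_irrefl_pairs _ (fun v w => v \in Y w)) // => v.
  by apply/negP => /Y_memP; rewrite eqxx.
have disj_FB : [disjoint Fwd & Bwd].
  rewrite -setI_eq0; apply/eqP/setP => -[v w]; rewrite !inE /=.
  by apply/negP => /andP [/andP [_ /Y_no_mutual/negP wYv] /andP [_]].
have disj_FBi : [disjoint Fwd :|: Bwd & Bi].
  rewrite -setI_eq0; apply/eqP/setP => -[v w]; rewrite !inE /=.
  apply/negP => /andP [/orP FBvw /andP [_ Bvw]].
  case: FBvw => /andP [_ /Y_memP /andP [_]]; first by rewrite Bvw.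
  by rewrite B_sym Bvw.
rewrite /numB -/Bi -card_disjoint_setU // -card_disjoint_setU //.
rewrite -card_ord_pairs_lt; apply: subset_leq_card; apply/subsetP => p.
by rewrite !inE -!andb_orr => /andP [].
Qed.

End EdgeBound.

Theorem mainTheorem4 (m : nat) (D B : rel 'I_m)
  (hD : irreflexive D) (hBirr : irreflexive B) (hBsym : symmetric B)
  (hedges : 'C(m, 2) < numD D + numB B) :
  HTC_infinite_to_one D B.
Proof.
move=> Y.
pose htc_conds v := (#|Y v| == #|pa D v|) && (Y v :&: (v |: sib B v) == set0).
have [/existsP [v /negP bad_v] | all_conds] := boolP [exists v, ~~ htc_conds v].
  left; exists v => -[card_v avoid_v _]; apply: bad_v.
  by rewrite /htc_conds card_v avoid_v !eqxx.
have [/existsP [v /existsP [w /and3P [ne_vw vYw wYv]]] | no_mutual] :=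
  boolP [exists v, exists w, [&& v != w, v \in Y w & w \in Y v]].
  by right; exists v, w.
have conds v : htc_conds v by move/existsPn/(_ v): all_conds; rewrite negbK.
have Y_card v : #|Y v| = #|pa D v| by case/andP: (conds v) => /eqP.
have Y_avoid v : Y v :&: (v |: sib B v) = set0 by case/andP: (conds v) => _ /eqP.
exfalso; move: hedges; rewrite ltnNge => /negP; apply.
apply: (edge_bound hBsym Y_card Y_avoid) => v w vYw; apply/negP => wYv.
move/existsPn/(_ v)/existsPn/(_ w): no_mutual; rewrite vYw wYv andbT.
by case/andP: (Y_memP Y_avoid vYw) => ->.
Qed.
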